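(* Let $\mathbf v_1$ and $\mathbf v_2$ be words. If the set of letters occurring in $\mathbf v_2$ is $\{x_1,x_2,\dots,x_n\}$ (with $x_1,\dots,x_n$ distinct) and each of these letters occurs in $\mathbf v_1$, then the identity $\mathbf v_1\mathbf v_2\approx\mathbf v_1x_1x_2\cdots x_n$ holds in the variety $\mathbf O$.
   Context: Words are elements of the free monoid over a countably infinite alphabet. $\mathbf O$ is the monoid variety defined by the identities $x^2y^2\approx y^2x^2$ and $xzxyxty\approx xzyxty$. *)

From mathcomp Require Import all_boot.
Set Implicit Arguments. Unset Strict Implicit. Unset Printing Implicit Defensive.

Definition word := seq nat.

Record monoid := Monoid {
  carrier :> Type;
  mop : carrier -> carrier -> carrier;
  mone : carrier;
  mopA : forall a b c, mop a (mop b c) = mop (mop a b) c;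
  mop1l : forall a, mop mone a = a;
  mop1r : forall a, mop a mone = a
}.

Definition eval (M : monoid) (f : nat -> M) (w : word) : M :=
  foldr (fun a r => mop (f a) r) (mone M) w.

Definition satisfies (M : monoid) (u v : word) : Prop :=
  forall f : nat -> M, eval f u = eval f v.

(* Letters x = 0, y = 1, z = 2, t = 3. *)
(* M belongs to the variety O defined by x^2y^2 ~ y^2x^2 and xzxyxty ~ xzyxty. *)
Definition in_O (M : monoid) : Prop :=
  satisfies M [:: 0; 0; 1; 1] [:: 1; 1; 0; 0] /\
  satisfies M [:: 0; 2; 0; 1; 0; 3; 1] [:: 0; 2; 1; 0; 3; 1].

Definition holds_in_O (u v : word) : Prop :=
  forall M : monoid, in_O M -> satisfies M u v.

From mathcomp Require Import all_boot.

(* Once every letter of a word u already occurs in the prefix v, the value of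
   v u depends only on the set of letters of u.  Instantiating
   x z x y x t y ~ x z y x t y at y = 1 shows that a letter occurring in v can
   be doubled or undoubled right after v; doubling two such letters a, b and
   using x^2 y^2 ~ y^2 x^2 then lets them commute: v ab ~ v aabb ~ v bbaa ~ v ba.
   Hence after v letters of u can be permuted and repetitions removed. *)

Lemma cons_subset {T : eqType} {x : T} {s w : seq T} :
  {subset x :: s <= w} -> x \in w /\ {subset s <= w}.
Proof. by move=> xsw; split=> [|y ys]; apply: xsw; rewrite in_cons ?eqxx ?ys ?orbT. Qed.

Lemma subset_rcons {T : eqType} {x : T} {s w : seq T} :
  {subset s <= w} -> {subset s <= rcons w x}.
Proof. by move=> sw y /sw yw; rewrite mem_rcons in_cons yw orbT. Qed.

Section WordsInO.

Variables (M : monoid) (f : nat -> M).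
Hypothesis HM : in_O M.

Lemma eval_cat (u v : word) : eval f (u ++ v) = mop (eval f u) (eval f v).
Proof.
elim: u => [|c u IH] /=; first by rewrite mop1l.
by rewrite IH mopA.
Qed.

Lemma in_O_sqC (a b t : M) :
  mop a (mop a (mop b (mop b t))) = mop b (mop b (mop a (mop a t))).
Proof.
have := proj1 HM (fun n => if n == 0 then a else b).
by rewrite /eval /= !mop1r !mopA => ->.
Qed.

Lemma in_O_sq_absorb (x z t : M) :
  mop x (mop z (mop x (mop x t))) = mop x (mop z (mop x t)).
Proof.
have := proj2 HM (fun n => match n with 0 => x | 1 => mone M | 2 => z | _ => t end).
by rewrite /eval /= !mop1l !mop1r => ->.
Qed.

Lemma eval_dup (w t : word) a :
  a \in w -> eval f (w ++ a :: a :: t) = eval f (w ++ a :: t).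
Proof.
case/splitPr=> p q; rewrite -!catA !eval_cat /=.
by rewrite -!mopA in_O_sq_absorb.
Qed.

Lemma eval_swap (w t : word) a b : a \in w -> b \in w ->
  eval f (w ++ a :: b :: t) = eval f (w ++ b :: a :: t).
Proof.
move=> aw bw.
have dup2 c d s : c \in w -> d \in w ->
    eval f (w ++ c :: d :: s) = eval f (w ++ [:: c, c, d, d & s]).
  move=> cw dw; rewrite -eval_dup //.
  rewrite -[[:: c, c, d & s]]/([:: c; c] ++ d :: s) catA -eval_dup; first by rewrite -catA.
  by rewrite mem_cat dw.
by rewrite dup2 // (dup2 b a) // !eval_cat /= in_O_sqC.
Qed.

Lemma eval_move (w s t : word) a : a \in w -> {subset s <= w} ->
  eval f (w ++ s ++ a :: t) = eval f (w ++ a :: s ++ t).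
Proof.
elim: s w => [|c s IH] w aw //= /cons_subset [cw sw].
rewrite -cat_rcons IH; first by rewrite cat_rcons eval_swap.
  by rewrite mem_rcons in_cons aw orbT.
exact: subset_rcons.
Qed.

Lemma eval_perm (w s s' : word) : {subset s <= w} -> perm_eq s s' ->
  eval f (w ++ s) = eval f (w ++ s').
Proof.
elim: s w s' => [|c s IH] w s' csw eqss'.
  by move: eqss'; rewrite perm_sym => /perm_nilP ->.
have cs' : c \in s' by rewrite -(perm_mem eqss') mem_head.
case/splitPr: cs' eqss' => p q eqss'.
have eqs : perm_eq s (p ++ q).
  rewrite -(perm_cons c); apply: perm_trans eqss' _.
  by rewrite -cat1s perm_catCA.
have [cw sw] := cons_subset csw.
rewrite eval_move //; last by move=> y yp; rewrite sw // (perm_mem eqs) mem_cat yp.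
by rewrite -!cat_rcons (IH _ _ _ eqs) //; apply: subset_rcons.
Qed.

Lemma eval_undup (w s : word) : {subset s <= w} ->
  eval f (w ++ s) = eval f (w ++ undup s).
Proof.
elim: s w => [|c s IH] w //= /cons_subset [cw sw].
case: ifP => [cs|_]; last by rewrite -!cat_rcons IH //; apply: subset_rcons.
rewrite -IH //; case/splitPr: cs sw => p q sw.
rewrite -eval_move //; last by move=> y yp; rewrite sw // mem_cat yp.
by rewrite catA eval_dup -?catA // mem_cat cw.
Qed.

Lemma eval_eq_mem (w s s' : word) : {subset s <= w} -> s =i s' ->
  eval f (w ++ s) = eval f (w ++ s').
Proof.
move=> sw eqss'.
have s'w : {subset s' <= w} by move=> y; rewrite -eqss'; apply: sw.
rewrite eval_undup // [RHS]eval_undup //; apply: eval_perm.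
  by move=> y; rewrite mem_undup; apply: sw.
by apply: uniq_perm; rewrite ?undup_uniq // => y; rewrite !mem_undup.
Qed.

End WordsInO.

Theorem lemma3p4 (v1 v2 : word) (xs : seq nat) :
  uniq xs ->
  (forall a, (a \in v2) = (a \in xs)) ->
  (forall a, a \in xs -> a \in v1) ->
  holds_in_O (v1 ++ v2) (v1 ++ xs).
Proof.
move=> _ eq_v2_xs xs_v1 M HM f.
by apply: eval_eq_mem => // y; rewrite eq_v2_xs => /xs_v1.
Qed.
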